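(* Let $\Sigma$ and $\Gamma$ be finite alphabets, each with at least two letters, and let $w \in \Sigma^+$. The following are equivalent: 1. $\mathrm{E}_{\mathcal{I}}(w) = \infty$. 2. $\mathrm{E}_{\mathcal{I}}(w) > |w|$. 3. There exist an injective morphism $h:\Sigma^*\to\Gamma^*$ and a letter $a \in \mathrm{alph}(w)$ such that $h(w) = x^r$ for some primitive word $x \in \Gamma^*$ and some rational $r$, and $|h(a)| \ge |x|$. 4. There exist an integer $k \ge 0$, a letter $a \in \Sigma$, words $w_1, w_2, w_3 \in (\Sigma \setminus \{a\})^*$ and an injective morphism $h:\Sigma^*\to\Gamma^*$ such that $w = w_1 (a w_2)^k a w_3$, $h(w_1)$ and $h(w_2)$ are suffix-comparable, and $h(w_2)$ and $h(w_3)$ are prefix-comparable.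
   Context: For a nonempty word $v$ and integer $p\ge 0$, $v^{p/|v|}$ denotes the prefix of length $p$ of the infinite word $vvv\cdots$. For a nonempty finite word $u$, its (fractional) exponent is $\mathrm{E}(u) = \sup\{ r \in \mathbb{Q} : u = v^r \text{ for some nonempty word } v\}$. A word $x$ is primitive if it is not of the form $y^k$ with $k \ge 2$ an integer. A morphism $h:\Sigma^*\to\Gamma^*$ satisfies $h(uv)=h(u)h(v)$ for all words $u,v$. $\mathcal{I}$ is the set of injective morphisms $\Sigma^* \to \Gamma^*$, and $\mathrm{E}_{\mathcal{I}}(w) = \sup\{\mathrm{E}(h(w)) : h \in \mathcal{I}\}$. $\mathrm{alph}(w)$ is the set of letters occurring in $w$. Words $u,v$ are prefix-comparable if $u$ is a prefix of $vs$ for some word $s$; suffix-comparable if $u$ is a suffix of $pv$ for some word $p$. *)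

From HB Require Import structures.
From mathcomp Require Import all_boot all_order all_algebra.
From mathcomp Require Import boolp classical_sets reals constructive_ereal ereal.
Set Implicit Arguments. Unset Strict Implicit. Unset Printing Implicit Defensive.
Import Order.TTheory GRing.Theory Num.Theory.
Local Open Scope ring_scope.
Local Open Scope classical_set_scope.

(* v^{p/|v|}: prefix of length p of the infinite word v v v ... *)
Definition pow_frac {T : Type} (v : seq T) (p : nat) : seq T :=
  take p (flatten (nseq p v)).

Definition is_pow {T : Type} (u v : seq T) (r : rat) : Prop :=
  v <> [::] /\ exists p : nat, r = (p%:R / (size v)%:R) /\ u = pow_frac v p.

Definition exponent (R : realType) {T : Type} (u : seq T) : \bar R :=
  ereal_sup [set ((ratr r : R)%:E) | r in [set r : rat | exists v, is_pow u v r]].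

Definition is_morphism {S T : Type} (h : seq S -> seq T) : Prop :=
  forall u v, h (u ++ v) = h u ++ h v.

Definition inj_morphism {S T : Type} (h : seq S -> seq T) : Prop :=
  is_morphism h /\ injective h.

Definition exponent_I (R : realType) (S T : Type) (w : seq S) : \bar R :=
  ereal_sup [set exponent R (h w) | h in [set h : seq S -> seq T | inj_morphism h]].

Definition primitive {T : Type} (x : seq T) : Prop :=
  ~ exists (y : seq T) (k : nat), (2 <= k)%N /\ x = flatten (nseq k y).

Definition prefix_comparable {T : Type} (u v : seq T) : Prop :=
  exists s t : seq T, v ++ s = u ++ t.

Definition suffix_comparable {T : Type} (u v : seq T) : Prop :=
  exists p t : seq T, p ++ v = t ++ u.

(* (2) => (3): if E(h(w)) > |w|, then h(w) = v^r with |h(w)| > |w| |v|, so some letter a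
   of w has |h(a)| > |v|, and |v| is at least the length of the primitive root x of v,
   of which h(w) is also a power.
   (3) => (4): h(w) is a prefix of x^omega, and since x is primitive, a factor of x^omega
   of length at least |x| determines its starting position modulo |x|.  So all
   occurrences of h(a) in h(w) start at the same residue, and for every factor a u of w
   running from one occurrence of a to the next, |h(a u)| is divisible by |x|.  Two such
   images h(a u), h(a u') occur at the same residue, hence commute, and injectivity of h
   forces u = u'; this gives w = w1 (a w2)^k a w3.  Comparing residues at the ends of
   h(w1) and h(w2), and at the starts of h(w2) and h(w3), gives the comparabilities.
   (4) => (1): write p h(w2) = t h(w1) and h(w3) t' = h(w2) s.  Send a to B (U B)^N, with
   B = s # p, U = h(w2) and # a fresh letter, and every other letter c to h(c).  The image
   of w is h(w1) (B U)^((N+1)k+N) B h(w3), where h(w1) is a suffix of B U and B h(w3) a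
   prefix of (B U)^2, so its exponent is at least N.  The letter # marks the images of a,
   which keeps the morphism injective, and the uniform code g |-> g g0, # |-> g0 g1
   (g0 <> g1) brings everything back to Gamma. *)

From mathcomp Require Import all_boot all_order all_algebra.
From mathcomp Require Import boolp classical_sets reals constructive_ereal ereal.
From mathcomp Require Import zify.
Set Implicit Arguments. Unset Strict Implicit. Unset Printing Implicit Defensive.
Import Order.TTheory GRing.Theory Num.Theory.

Section WordPowers.
Variable T : Type.
Implicit Types x y u v : seq T.

Definition wpow x m := flatten (nseq m x).

Lemma size_wpow x m : size (wpow x m) = m * size x.
Proof. by elim: m => //= m IH; rewrite size_cat -/(wpow x m) IH mulSn. Qed.

Lemma wpowS x m : wpow x m.+1 = x ++ wpow x m.
Proof. by []. Qed.

Lemma wpowD x m1 m2 : wpow x (m1 + m2) = wpow x m1 ++ wpow x m2.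
Proof. by rewrite /wpow nseqD flatten_cat. Qed.

Lemma wpowSr x m : wpow x m.+1 = wpow x m ++ x.
Proof. by rewrite -addn1 wpowD /wpow /= cats0. Qed.

Lemma wpowM x m k : wpow (wpow x m) k = wpow x (m * k).
Proof. by elim: k => [|k IH]; rewrite ?muln0 // wpowS IH mulnS wpowD. Qed.

Lemma cat_wpow_conj x y m : x ++ wpow (y ++ x) m = wpow (x ++ y) m ++ x.
Proof.
elim: m => [|m IH]; first by rewrite cats0.
by rewrite wpowS [wpow (x ++ y) _]wpowS -!catA IH.
Qed.

Lemma take_wpow x m m' P : P <= m * size x -> P <= m' * size x ->
  take P (wpow x m) = take P (wpow x m').
Proof.
wlog le_mm' : m m' / m <= m' => [wlog_le|].
  by case: (leqP m m') => [|/ltnW] le hm hm'; [|symmetry]; apply: wlog_le.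
by move=> hm _; rewrite -(subnKC le_mm') wpowD takel_cat // size_wpow.
Qed.

Lemma catsI u : injective (cat u).
Proof. by move=> v v' /(congr1 (drop (size u))); rewrite !drop_size_cat. Qed.

Lemma catIs u : injective (cat^~ u).
Proof.
move=> v v' E; have /addIn sz : size v + size u = size v' + size u.
  by rewrite -!size_cat E.
by rewrite -(take_size_cat u (erefl (size v))) E take_size_cat.
Qed.

Lemma size_pow_frac v p : v <> [::] -> size (pow_frac v p) = p.
Proof.
by case: v => // c v _; rewrite size_takel // -/(wpow _ p) size_wpow leq_pmulr.
Qed.

Lemma is_pow_size u v r : is_pow u v r -> r = ((size u)%:R / (size v)%:R)%R.
Proof. by case=> vn [p [-> ->]]; rewrite size_pow_frac. Qed.

Lemma is_pow_prefix x u t m : x <> [::] -> u ++ t = wpow x m ->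
  is_pow u x ((size u)%:R / (size x)%:R)%R.
Proof.
move=> xn E; split=> //; exists (size u); split=> //.
have x_gt0 : 0 < size x by case: x xn E.
have hu : size u <= m * size x by rewrite -size_wpow -E size_cat leq_addr.
rewrite /pow_frac -/(wpow x (size u)) (@take_wpow x (size u) m) ?leq_pmulr //.
by rewrite -E take_size_cat.
Qed.

Lemma cat_commute_wpow u v : u ++ v = v ++ u ->
  exists z k l, u = wpow z k /\ v = wpow z l.
Proof.
have [N] := ubnP (size u + size v); elim: N u v => // N IH u v.
wlog le_uv : u v / size u <= size v => [wlog_le|].
  case: (leqP (size u) (size v)) => [|/ltnW] le; first exact: wlog_le.
  rewrite addnC => hN /esym E; have [z [k [l [-> ->]]]] := wlog_le v u le hN E.
  by exists z, l, k.
case: u le_uv => [|c u'] le_uv hN E; first by exists v, 0, 1; rewrite /wpow /= cats0.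
set u := c :: u' in le_uv hN E *.
have ev : v = u ++ drop (size u) v.
  have := congr1 (take (size u)) E; rewrite take_size_cat // takel_cat // => eu.
  by rewrite {1}eu cat_take_drop.
set v' := drop (size u) v in ev.
have E' : u ++ v' = v' ++ u.
  have := congr1 (drop (size u)) E.
  by rewrite {1}ev drop_size_cat // ev -catA drop_size_cat.
have [|z [k [l [eu ev']]]] := IH _ _ _ E'.
  by move: hN; rewrite ev size_cat /u /=; lia.
by exists z, k, (k + l); rewrite ev eu ev' wpowD.
Qed.

Lemma primitive_size_gt0 x : primitive x -> 0 < size x.
Proof. by case: x => // px; case: px; exists [::], 2. Qed.

Lemma primitive_rot_id x d : primitive x -> d < size x -> rot d x = x -> d = 0.
Proof.
move=> px ltdx; case: d ltdx => // d ltdx rotx; case: px.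
have [z [k [l [ek el]]]] : exists z k l, take d.+1 x = wpow z k /\ drop d.+1 x = wpow z l.
  by apply: cat_commute_wpow; rewrite cat_take_drop -{1}rotx.
have k_gt0 : 0 < k.
  by case: k ek => // /(congr1 size); rewrite size_takel //; apply: ltnW.
have l_gt0 : 0 < l by case: l el => // /(congr1 size); rewrite size_drop /=; lia.
exists z, (k + l); split; first by lia.
by rewrite -/(wpow z _) wpowD -ek -el cat_take_drop.
Qed.

Lemma wpow_primitive_root v : v <> [::] ->
  exists x j, [/\ primitive x, 0 < j & v = wpow x j].
Proof.
have [N] := ubnP (size v); elim: N v => // N IH v hN vn.
have [pv|npv] := EM (primitive v).
  by exists v, 1; split=> //; rewrite /wpow /= cats0.
have [y [k [k_ge2 ev]]] : exists y k, 1 < k /\ v = wpow y k by apply: contrapT.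
have yn : y <> [::] by move=> y0; apply: vn; rewrite ev y0 /wpow; elim: (k).
have y_gt0 : 0 < size y by case: y yn {ev}.
have [|x [j [px j_gt0 ey]]] := IH y _ yn.
  by move: hN; rewrite ev size_wpow; nia.
exists x, (j * k); split=> //; first by rewrite muln_gt0 j_gt0; lia.
by rewrite ev ey wpowM.
Qed.

Lemma is_pow_primitive_root u v r : is_pow u v r ->
  exists x, [/\ primitive x, size x <= size v & is_pow u x ((size u)%:R / (size x)%:R)%R].
Proof.
case=> vn [p [_ ->]]; have [x [j [px j_gt0 ev]]] := wpow_primitive_root vn.
have xn : x <> [::] by case: x px {ev} => // /primitive_size_gt0.
exists x; split=> //; first by rewrite ev size_wpow leq_pmull.
apply: (@is_pow_prefix _ _ (drop p (wpow v p)) (j * p) xn).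
by rewrite /pow_frac -/(wpow v p) cat_take_drop ev wpowM.
Qed.

End WordPowers.

Section Exponents.
Variable R : realType.
Local Open Scope ereal_scope.

Lemma is_pow_le_exponent T (u v : seq T) r : is_pow u v r -> (ratr r : R)%:E <= exponent R u.
Proof. by move=> H; apply: ereal_sup_ubound; exists r => //; exists v. Qed.

Lemma exponent_le_exponent_I (S T : Type) (h : seq S -> seq T) w :
  inj_morphism h -> exponent R (h w) <= exponent_I R T w.
Proof. by move=> hi; apply: ereal_sup_ubound; exists h. Qed.

Lemma exponent_conj_factor_ge T (c c0 d d0 Y : seq T) m : Y <> [::] ->
  c0 ++ c = Y -> d ++ d0 = Y ++ Y -> (m%:R : R)%:E <= exponent R (c ++ wpow Y m ++ d).
Proof.
move=> Yn eY eYY.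
have size_cc0 : size (c ++ c0) = size Y by rewrite -eY !size_cat addnC.
have cc0n : c ++ c0 <> [::] by move/(congr1 size); rewrite size_cc0 => /size0nil.
have E : (c ++ wpow Y m ++ d) ++ d0 ++ c0 = wpow (c ++ c0) m.+3.
  have YY : Y ++ Y = wpow Y 2 by rewrite /wpow /= cats0.
  rewrite -!catA [d ++ _]catA eYY YY [wpow Y m ++ _]catA -wpowD addn2 -eY.
  by rewrite catA cat_wpow_conj -catA -wpowSr.
apply: le_trans (is_pow_le_exponent (is_pow_prefix cc0n E)).
have Y_gt0 : (0 < size Y)%N by case: Y Yn {eY eYY size_cc0 E}.
rewrite lee_fin fmorph_div !rmorph_nat size_cc0 ler_pdivlMr ?ltr0n // -natrM ler_nat.
by rewrite !size_cat size_wpow addnCA leq_addr.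
Qed.

End Exponents.

Section Occurrences.
Variables (T : Type) (x0 : T) (x : seq T).
Local Notation n := (size x).

Definition xomega i := nth x0 x (i %% n).

Definition occurs_at (y : seq T) i := forall j, j < size y -> nth x0 y j = xomega (i + j).

Lemma xomegaDml i j : xomega (i %% n + j) = xomega (i + j).
Proof. by rewrite /xomega modnDml. Qed.

Lemma xomegaDmr i j : xomega (i + j %% n) = xomega (i + j).
Proof. by rewrite /xomega modnDmr. Qed.

Lemma xomegaDn i : xomega (i + n) = xomega i.
Proof. by rewrite /xomega modnDr. Qed.

Lemma nth_wpow m i : i < m * n -> nth x0 (wpow x m) i = xomega i.
Proof.
elim: m i => // m IH i; rewrite wpowS nth_cat mulSn => lt_i.
case: ltnP => [lt_in|le_ni]; first by rewrite /xomega modn_small.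
rewrite IH; last by lia.
by rewrite -xomegaDn subnK.
Qed.

Lemma occurs_at_pow_frac P : occurs_at (pow_frac x P) 0.
Proof.
move=> j; rewrite size_take_min leq_min => /andP[lt_jP lt_j].
by rewrite nth_take // nth_wpow // -size_wpow.
Qed.

Lemma occurs_at_catl u v i : occurs_at (u ++ v) i -> occurs_at u i.
Proof. by move=> H j lt_j; rewrite -(H j) ?nth_cat ?lt_j // size_cat ltn_addr. Qed.

Lemma occurs_at_catr u v i : occurs_at (u ++ v) i -> occurs_at v (i + size u).
Proof.
move=> H j lt_j; have := H (size u + j).
rewrite size_cat ltn_add2l nth_cat -addnA => /(_ lt_j).
by rewrite ltnNge leq_addr /= addKn.
Qed.

Lemma occurs_at_cat u v i :
  occurs_at u i -> occurs_at v (i + size u) -> occurs_at (u ++ v) i.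
Proof.
move=> Hu Hv j; rewrite size_cat nth_cat => lt_j.
case: ltnP => [|le_uj]; first exact: Hu.
rewrite Hv; last by lia.
by rewrite -addnA subnKC.
Qed.

Lemma occurs_at_modn y i i' : i %% n = i' %% n -> occurs_at y i -> occurs_at y i'.
Proof. by move=> e H j lt_j; rewrite H // -xomegaDml e xomegaDml. Qed.

Lemma occurs_at_eq u v i : occurs_at u i -> occurs_at v i -> size u = size v -> u = v.
Proof.
move=> Hu Hv e; apply: (eq_from_nth (x0 := x0) e) => j lt_j.
by rewrite Hu // Hv // -e.
Qed.

Lemma occurs_at_prefix_comparable u v i j : i %% n = j %% n ->
  occurs_at u i -> occurs_at v j -> prefix_comparable u v.
Proof.
move=> e Hu /(occurs_at_modn (esym e)) Hv.
have take_eq (y z : seq T) : size y <= size z -> occurs_at y i -> occurs_at z i ->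
    z = y ++ drop (size y) z.
  move=> le_yz Hy Hz; rewrite -{1}(cat_take_drop (size y) z); congr (_ ++ _).
  apply: occurs_at_eq _ Hy _; last by rewrite size_takel.
  by rewrite -(cat_take_drop (size y) z) in Hz; apply: occurs_at_catl Hz.
case: (leqP (size u) (size v)) => [le_uv|/ltnW le_vu].
  by exists [::], (drop (size u) v); rewrite cats0 -take_eq.
by exists (drop (size v) u), [::]; rewrite cats0 -take_eq.
Qed.

Lemma occurs_at_suffix_comparable u v i j : (i + size u) %% n = (j + size v) %% n ->
  occurs_at u i -> occurs_at v j -> suffix_comparable u v.
Proof.
wlog le_uv : u v i j / size u <= size v => [wlog_le|].
  case: (leqP (size u) (size v)) => [|/ltnW] le e Hu Hv; first exact: wlog_le e Hu Hv.
  by have [p [t E]] := wlog_le v u j i le (esym e) Hv Hu; exists t, p.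
move=> e Hu Hv; exists [::], (take (size v - size u) v) => /=.
rewrite -[LHS](cat_take_drop (size v - size u) v); congr (_ ++ _).
rewrite -(cat_take_drop (size v - size u) v) in Hv.
have := occurs_at_catr Hv; rewrite size_takel ?leq_subr // => Hd.
apply: (occurs_at_eq _ Hu); last by rewrite size_drop subKn.
apply: occurs_at_modn Hd; apply/eqP.
by rewrite -(eqn_modDr (size u)) -addnA subnK // eq_sym; apply/eqP.
Qed.

Lemma nth_rot d t : d <= n -> t < n -> nth x0 (rot d x) t = xomega (t + d).
Proof.
move=> le_dn lt_tn; rewrite nth_cat size_drop /xomega.
case: ltnP => [lt_t|le_t].
  by rewrite nth_drop [t + d]addnC modn_small //; lia.
rewrite nth_take; last by lia.
have -> : t + d = t - (n - d) + n by lia.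
by rewrite modnDr modn_small //; lia.
Qed.

Lemma xomega_period d : primitive x -> (forall i, xomega (i + d) = xomega i) ->
  d %% n = 0.
Proof.
move=> px per; have n_gt0 := primitive_size_gt0 px.
apply: primitive_rot_id px (ltn_pmod _ n_gt0) _.
apply: (eq_from_nth (x0 := x0)); rewrite ?size_rot // => t lt_tn.
have lt_dn : d %% n < n by rewrite ltn_pmod.
by rewrite nth_rot ?(ltnW lt_dn) // xomegaDmr per /xomega modn_small.
Qed.

Lemma occurs_at_residue y i j : primitive x -> n <= size y ->
  occurs_at y i -> occurs_at y j -> i %% n = j %% n.
Proof.
move=> px le_ny; have n_gt0 := primitive_size_gt0 px.
wlog le_ij : i j / i %% n <= j %% n => [wlog_le|Hi Hj].
  by case: (leqP (i %% n) (j %% n)) => [|/ltnW] le Hi Hj;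
     [|symmetry]; apply: wlog_le.
have same s : xomega (i + s) = xomega (j + s).
  have lt_s : s %% n < size y by apply: leq_trans le_ny; rewrite ltn_pmod.
  by rewrite -[LHS]xomegaDmr -[RHS]xomegaDmr -Hi // -Hj.
have per t : xomega (t + (j %% n - i %% n)) = xomega t.
  have := same (t + n - i %% n); rewrite -xomegaDml -[xomega (j + _)]xomegaDml.
  have lt_i : i %% n < n by rewrite ltn_pmod.
  have lt_j : j %% n < n by rewrite ltn_pmod.
  have -> : i %% n + (t + n - i %% n) = t + n by lia.
  have -> : j %% n + (t + n - i %% n) = t + (j %% n - i %% n) + n by lia.
  by rewrite !xomegaDn.
have := xomega_period px per; rewrite modn_small; first by lia.
by apply: leq_ltn_trans (leq_subr _ _) _; rewrite ltn_pmod.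
Qed.

End Occurrences.

Section Morphisms.
Variables (S G : Type) (h : seq S -> seq G).
Hypothesis hM : is_morphism h.

Lemma morph_nil : h [::] = [::].
Proof.
have /(congr1 size) := hM [::] [::]; rewrite size_cat.
by case: (h [::]) => //= ? ?; lia.
Qed.

Lemma morph_cons c l : h (c :: l) = h [:: c] ++ h l.
Proof. by rewrite -hM. Qed.

Lemma morph_wpow z k : h (wpow z k) = wpow (h z) k.
Proof. by elim: k => [|k IH]; rewrite ?morph_nil // wpowS hM IH. Qed.

End Morphisms.

Lemma morph_long_letter (S : eqType) G (h : seq S -> seq G) w m : is_morphism h ->
  size w * m < size (h w) -> exists2 c, c \in w & m < size (h [:: c]).
Proof.
move=> hM; elim: w => [|c w IH] /=; first by rewrite morph_nil.
rewrite (morph_cons hM) size_cat mulSn => lt_hw.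
case: (ltnP m (size (h [:: c]))) => [|le_c]; first by exists c; rewrite ?mem_head.
by have [|d dw] := IH; [lia | exists d; rewrite // in_cons dw orbT].
Qed.

Lemma mem_split_first (S : eqType) (a : S) s : a \in s ->
  exists s1 s2, s = s1 ++ a :: s2 /\ a \notin s1.
Proof.
elim: s => // c s IH; rewrite in_cons; case: eqVneq => [->|ne] /= H.
  by exists [::], s.
have [s1 [s2 [-> as1]]] := IH H.
by exists (c :: s1), s2; rewrite in_cons negb_or ne.
Qed.

Lemma cat_cons_notin_inj (S : eqType) (a : S) u v s t :
  a \notin u -> a \notin v -> u ++ a :: s = v ++ a :: t -> u = v /\ s = t.
Proof.
move=> au av E; have := congr1 (index a) E.
rewrite !index_cat (negbTE au) (negbTE av) /= eqxx !addn0 => size_uv.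
by move/eqP: E; rewrite eqseq_cat // => /andP[/eqP -> /eqP[]].
Qed.

Definition comparable_factorization (S : eqType) (G : Type) (h : seq S -> seq G) w a k
    w1 w2 w3 :=
  [/\ a \notin w1, a \notin w2 & a \notin w3] /\
  [/\ w = w1 ++ wpow (a :: w2) k ++ a :: w3,
      suffix_comparable (h w1) (h w2) & prefix_comparable (h w2) (h w3)].

Section PrimitiveImage.
Variables (S : eqType) (G : Type) (h : seq S -> seq G).
Hypothesis h_inj : inj_morphism h.
Variables (x0 : G) (x : seq G) (a : S).
Hypotheses (px : primitive x) (long_a : size x <= size (h [:: a])).
Local Notation n := (size x).
Local Notation occurs_at := (occurs_at x0 x).

Let hM : is_morphism h := proj1 h_inj.

Lemma occurs_at_letter_residue r1 r2 i j :
  occurs_at (h (a :: r1)) i -> occurs_at (h (a :: r2)) j -> i %% n = j %% n.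
Proof.
rewrite (morph_cons hM a r1) (morph_cons hM a r2).
move=> H1 H2; exact: occurs_at_residue px long_a (occurs_at_catl H1) (occurs_at_catl H2).
Qed.

Lemma block_size_modn u r i : occurs_at (h (a :: u ++ a :: r)) i ->
  size (h (a :: u)) %% n = 0.
Proof.
rewrite -cat_cons hM => H; apply/eqP.
have /eqP := occurs_at_letter_residue (occurs_at_catr H) (occurs_at_catl H).
by rewrite -{2}[i]addn0 eqn_modDl mod0n.
Qed.

Section Blocks.
Variables (u : seq S) (P0 : nat).
Hypotheses (au : a \notin u) (occ_u : occurs_at (h (a :: u)) P0).
Hypothesis block_u : size (h (a :: u)) %% n = 0.

Lemma block_eq r i : a \notin r -> occurs_at (h (a :: r)) i ->
  size (h (a :: r)) %% n = 0 -> r = u.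
Proof.
move=> ar Hr block_r; have Hu := occurs_at_modn (occurs_at_letter_residue occ_u Hr) occ_u.
have E : h ((a :: u) ++ a :: r) = h ((a :: r) ++ a :: u).
  rewrite !hM; apply: (@occurs_at_eq _ x0 x _ _ i); last by rewrite !size_cat addnC.
  - apply: occurs_at_cat Hu (occurs_at_modn _ Hr).
    by rewrite -modnDmr block_u addn0.
  - apply: occurs_at_cat Hr (occurs_at_modn _ Hu).
    by rewrite -modnDmr block_r addn0.
by case: (proj2 h_inj _ _ E) => /(cat_cons_notin_inj au ar) [].
Qed.

Lemma block_factorization r i : occurs_at (h (a :: r)) i ->
  exists k w3, a \notin w3 /\ a :: r = wpow (a :: u) k ++ a :: w3.
Proof.
have [N] := ubnP (size r); elim: N r i => // N IH r i lt_r Hr.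
case: (boolP (a \in r)) => ar; last by exists 0, r.
have [r0 [r' [er ar0]]] := mem_split_first ar; rewrite er in lt_r Hr *.
have Hr' : occurs_at (h (a :: r0) ++ h (a :: r')) i by rewrite -hM.
have e0 := block_eq ar0 (occurs_at_catl Hr') (block_size_modn Hr).
have [|k [w3 [aw3 ->]]] := IH r' _ _ (occurs_at_catr Hr').
  by move: lt_r; rewrite size_cat /=; lia.
by exists k.+1, w3; rewrite e0 wpowS -catA.
Qed.

End Blocks.

Lemma factorization_comparable w1 u k w3 :
  occurs_at (h (w1 ++ wpow (a :: u) k.+1 ++ a :: w3)) 0 -> size (h (a :: u)) %% n = 0 ->
  suffix_comparable (h w1) (h u) /\ prefix_comparable (h u) (h w3).
Proof.
rewrite wpowS -catA !hM => H block_u.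
have Hau := occurs_at_catl (occurs_at_catr H); rewrite (morph_cons hM) in Hau.
have Haw3 := occurs_at_catr (occurs_at_catr (occurs_at_catr H)).
rewrite (morph_cons hM) in Haw3.
have Hu := occurs_at_catr Hau; have Hw3 := occurs_at_catr Haw3.
split.
  apply: occurs_at_suffix_comparable (occurs_at_catl H) Hu.
  by rewrite -addnA -size_cat -(morph_cons hM) -[in RHS]modnDmr block_u addn0.
apply: occurs_at_prefix_comparable Hu Hw3.
have block_k : size (h (wpow (a :: u) k)) %% n = 0.
  by rewrite (morph_wpow hM) size_wpow -modnMmr block_u muln0 mod0n.
have UK : (size (h (a :: u)) + size (h (wpow (a :: u) k))) %% n = 0.
  by rewrite -modnDm block_u block_k add0n mod0n.
set A := 0 + size (h w1); set U := size (h (a :: u)).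
set K := size (h (wpow (a :: u) k)).
have -> : A + U + K + size (h [:: a]) = A + size (h [:: a]) + (U + K) by lia.
by rewrite -[in RHS]modnDmr UK addn0.
Qed.

Lemma letter_factorization w : a \in w -> occurs_at (h w) 0 ->
  exists k w1 w2 w3, comparable_factorization h w a k w1 w2 w3.
Proof.
move=> aw Hw; have [w1 [r [ew aw1]]] := mem_split_first aw.
case: (boolP (a \in r)) => ar; last first.
  exists 0, w1, [::], r; rewrite /comparable_factorization (morph_nil hM).
  split=> //; split=> //.
    by exists (h w1), [::]; rewrite cats0.
  by exists [::], (h r); rewrite cats0.
have [u [r2 [er au]]] := mem_split_first ar.
have Hau : occurs_at (h (a :: u ++ a :: r2)) (size (h w1)).
  by apply: occurs_at_catr (_ : occurs_at (h w1 ++ _) 0); rewrite -hM -er -ew.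
have block_u := block_size_modn Hau.
move: Hau; rewrite -cat_cons hM => Hau.
have [k [w3 [aw3 e3]]] := block_factorization au (occurs_at_catl Hau) block_u
  (occurs_at_catr Hau).
have ew' : w = w1 ++ wpow (a :: u) k.+1 ++ a :: w3.
  by rewrite ew er e3 wpowS -catA.
have [sc pc] : suffix_comparable (h w1) (h u) /\ prefix_comparable (h u) (h w3).
  by apply: (factorization_comparable (k := k)) block_u; rewrite -ew'.
by exists k.+1, w1, u, w3.
Qed.

End PrimitiveImage.

Lemma primitive_image_factorization (S : eqType) G (h : seq S -> seq G) w a x r :
  inj_morphism h -> a \in w -> primitive x -> is_pow (h w) x r ->
  size x <= size (h [:: a]) ->
  exists k w1 w2 w3, comparable_factorization h w a k w1 w2 w3.
Proof.
move=> hi aw px [_ [p [_ ew]]] long_a.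
case: x px ew long_a => [|x0 x'] px ew long_a; first by have := primitive_size_gt0 px.
apply: (letter_factorization (x0 := x0) hi px long_a aw).
by rewrite ew; apply: occurs_at_pow_frac.
Qed.

Section MarkerCode.
Variables (G : eqType) (g0 g1 : G).
Hypothesis g01 : g0 != g1.

Definition mark_code (o : option G) : seq G :=
  if o is Some g then [:: g; g0] else [:: g0; g1].

Definition mark_encode (l : seq (option G)) : seq G := flatten (map mark_code l).

Lemma mark_encode_morphism : is_morphism mark_encode.
Proof. by move=> l l'; rewrite /mark_encode map_cat flatten_cat. Qed.

Lemma mark_encode_inj : injective mark_encode.
Proof.
elim=> [|o l IH] [|o' l'] //=; rewrite /mark_encode /=.
- by case: o'.
- by case: o.
case: o => [g|]; case: o' => [g'|] //= [].
- by move=> -> /IH ->.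
- by move=> _ g01E; move: g01; rewrite g01E eqxx.
- by move=> _ g10E; move: g01; rewrite g10E eqxx.
- by move=> /IH ->.
Qed.

End MarkerCode.

Lemma None_notin_map_Some (G : eqType) (l : seq G) : None \notin map Some l.
Proof. by apply/mapP => -[]. Qed.

Section Pumping.
Variables (S G : eqType) (h : seq S -> seq G).
Hypothesis h_inj : inj_morphism h.
Variables (a : S) (s p u : seq G) (N : nat).
(* [None] plays the fresh letter #. *)
Local Notation B := (map Some s ++ None :: map Some p).
Local Notation U := (map Some u).

Let hM : is_morphism h := proj1 h_inj.

Definition pump_letter c := if c == a then B ++ wpow (U ++ B) N else map Some (h [:: c]).

Definition pump l := flatten (map pump_letter l).

Lemma pump_morphism : is_morphism pump.
Proof. by move=> l l'; rewrite /pump map_cat flatten_cat. Qed.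

Lemma pump_notin l : a \notin l -> pump l = map Some (h l).
Proof.
elim: l => [|c l IH]; first by rewrite (morph_nil hM).
rewrite in_cons negb_or => /andP[ac al].
rewrite /pump /= -/(pump l) IH // /pump_letter eq_sym (negbTE ac).
by rewrite (morph_cons hM c l) map_cat.
Qed.

Lemma pump_split l1 l2 : a \notin l1 ->
  pump (l1 ++ a :: l2) =
  map Some (h l1 ++ s) ++ None :: map Some p ++ wpow (U ++ B) N ++ pump l2.
Proof.
by move=> al1; rewrite pump_morphism pump_notin // /pump /= /pump_letter eqxx map_cat -!catA.
Qed.

Lemma mem_None_pump l : (None \in pump l) = (a \in l).
Proof.
elim: l => // c l IH; rewrite /pump /= -/(pump l) mem_cat IH /pump_letter in_cons.
case: (eqVneq c a) => [_|_]; first by rewrite !mem_cat in_cons eqxx !orbT.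
by rewrite (negbTE (None_notin_map_Some _)).
Qed.

Lemma pump_inj : injective pump.
Proof.
move=> l; have [M] := ubnP (size l); elim: M l => // M IH l lt_l l' E.
have al_iff : (a \in l) = (a \in l') by rewrite -!mem_None_pump E.
have [al|nal] := boolP (a \in l); last first.
  have nal' : a \notin l' by rewrite -al_iff.
  rewrite !pump_notin // in E; exact: (proj2 h_inj) (inj_map Some_inj E).
have al' : a \in l' by rewrite -al_iff.
have [l1 [l2 [el al1]]] := mem_split_first al.
have [l1' [l2' [el' al1']]] := mem_split_first al'.
subst l l'; rewrite !pump_split // in E.
have [/(inj_map Some_inj)/catIs/(proj2 h_inj) <- /catsI/catsI E2] :=
  cat_cons_notin_inj (None_notin_map_Some _) (None_notin_map_Some _) E.
by rewrite (IH l2 _ l2' E2) //; move: lt_l; rewrite size_cat /=; lia.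
Qed.

Lemma pump_image k w1 w2 w3 : a \notin w1 -> a \notin w2 -> a \notin w3 -> h w2 = u ->
  pump (w1 ++ wpow (a :: w2) k ++ a :: w3) =
  map Some (h w1) ++ wpow (B ++ U) (N.+1 * k + N) ++ B ++ map Some (h w3).
Proof.
move=> a1 a2 a3 hu.
have pump_cons l : a \notin l -> pump (a :: l) = wpow (B ++ U) N ++ B ++ map Some (h l).
  move=> al; rewrite -cat1s pump_morphism (pump_notin al) /pump /= /pump_letter eqxx.
  by rewrite cats0 cat_wpow_conj -catA.
rewrite !pump_morphism pump_notin // (morph_wpow pump_morphism) !pump_cons // hu.
by rewrite -[wpow (B ++ U) N ++ B ++ U]wpowSr wpowM wpowD -[in RHS]catA.
Qed.

Variables (g0 g1 : G).
Hypothesis g01 : g0 != g1.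

Lemma pump_inj_morphism : inj_morphism (mark_encode g0 g1 \o pump).
Proof.
split; first by move=> l l'; rewrite /= pump_morphism mark_encode_morphism.
by move=> l l' /(mark_encode_inj g01) /pump_inj.
Qed.

Lemma pump_exponent_ge (R : realType) k w1 w2 w3 t t' :
  a \notin w1 -> a \notin w2 -> a \notin w3 -> h w2 = u ->
  p ++ h w2 = t ++ h w1 -> h w3 ++ t' = h w2 ++ s ->
  ((N%:R : R)%:E <=
   exponent R ((mark_encode g0 g1 \o pump) (w1 ++ wpow (a :: w2) k ++ a :: w3)))%E.
Proof.
move=> a1 a2 a3 hu sc pc; set enc := mark_encode g0 g1.
have encM : is_morphism enc := mark_encode_morphism g0 g1.
rewrite /= pump_image // 2!encM (morph_wpow encM).
set Y := enc (B ++ U).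
have Yn : Y <> [::] by rewrite /Y -catA encM /enc /mark_encode /=; case: (flatten _).
have eY : enc (map Some s ++ None :: map Some t) ++ enc (map Some (h w1)) = Y.
  by rewrite /Y -encM -!catA /= -map_cat -sc map_cat hu.
have pc' X : map Some (h w3) ++ map Some t' ++ X = U ++ map Some s ++ X.
  by rewrite catA -map_cat pc map_cat hu -catA.
have eYY : enc (B ++ map Some (h w3)) ++ enc (map Some t' ++ None :: map Some p ++ U) = Y ++ Y.
  by rewrite /Y -!encM -!catA /= pc'.
apply: le_trans (exponent_conj_factor_ge R _ Yn eY eYY).
by rewrite lee_fin ler_nat leq_addl.
Qed.
End Pumping.

Lemma comparable_factorization_exponent_I_infty (R : realType) (S G : eqType)
    (g0 g1 : G) (h : seq S -> seq G) (w : seq S) a k w1 w2 w3 :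
  g0 != g1 -> inj_morphism h -> comparable_factorization h w a k w1 w2 w3 ->
  exponent_I R G w = +oo%E.
Proof.
move=> g01 hi [[a1 a2 a3] [-> [p [t sc]] [t' [s pc]]]]; apply: eq_infty => M.
set N := Num.Def.archi_bound `|M|.
have ltMN : (M < N%:R)%R := le_lt_trans (ler_norm M) (archi_boundP (normr_ge0 M)).
apply: le_trans (exponent_le_exponent_I _ _ (pump_inj_morphism hi a s p (h w2) N g01)).
apply: le_trans (pump_exponent_ge hi N g0 g1 R k a1 a2 a3 erefl sc pc).
by rewrite lee_fin ltW.
Qed.

Lemma exponent_I_gt_size_long_letter (R : realType) (S : eqType) (T : Type) (w : seq S) :
  ((size w)%:R%:E < exponent_I R T w)%E ->
  exists (h : seq S -> seq T) (a : S) (x : seq T) (r : rat),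
    [/\ inj_morphism h, a \in w, primitive x, is_pow (h w) x r & size x <= size (h [:: a])].
Proof.
move=> /ereal_sup_gt [_ [h hi <-]] /ereal_sup_gt [_ [r [v ipv] <-]].
have v_gt0 : 0 < size v by case: ipv; case: v.
rewrite lte_fin (is_pow_size ipv) fmorph_div !rmorph_nat ltr_pdivlMr ?ltr0n //.
rewrite -natrM ltr_nat => lt_wv.
have [a aw lt_va] := morph_long_letter (proj1 hi) lt_wv.
have [x [px le_xv ipx]] := is_pow_primitive_root ipv.
exists h, a, x, ((size (h w))%:R / (size x)%:R)%R; split=> //.
exact: leq_trans le_xv (ltnW lt_va).
Qed.

Unset Implicit Arguments.

Theorem theorem9 (R : realType) (Sigma Gamma : finType)
  (hSigma : (2 <= #|Sigma|)%N) (hGamma : (2 <= #|Gamma|)%N)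
  (w : seq Sigma) (hw : w <> [::]) :
  [<->
    exponent_I R Gamma w = +oo%E;
    ((size w)%:R%:E < exponent_I R Gamma w)%E;
    exists (h : seq Sigma -> seq Gamma) (a : Sigma) (x : seq Gamma) (r : rat),
      [/\ inj_morphism h, a \in w, primitive x, is_pow (h w) x r
        & (size x <= size (h [:: a]))%N];
    exists (k : nat) (a : Sigma) (w1 w2 w3 : seq Sigma)
           (h : seq Sigma -> seq Gamma),
      [/\ a \notin w1, a \notin w2, a \notin w3 & inj_morphism h] /\
      [/\ w = w1 ++ flatten (nseq k (a :: w2)) ++ a :: w3,
          suffix_comparable (h w1) (h w2)
        & prefix_comparable (h w2) (h w3)]].
Proof.
tfae.
- by move=> ->; apply: ltry.
- exact: exponent_I_gt_size_long_letter.
- move=> [h [a [x [r [hi aw px ipw long_a]]]]].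
  have [k [w1 [w2 [w3 [[a1 a2 a3] fact]]]]] :=
    primitive_image_factorization hi aw px ipw long_a.
  by exists k, a, w1, w2, w3, h.
- move=> [k [a [w1 [w2 [w3 [h [[a1 a2 a3 hi] fact]]]]]]].
  have [g0 [g1 [_ _ g01]]] := card_gt1P hGamma.
  exact: comparable_factorization_exponent_I_infty g01 hi (conj (And3 a1 a2 a3) fact).
Qed.
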